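(* Let $n\ge 1$ and let $Y\subseteq\mathbb{S}^{n-1}$ be a finite set with $I(Y)=\{0,\pm\alpha\}$ for some real $\alpha\neq 0$ (so $Y$ is a spherical $3$-distance set). If $|Y|>2n$, then $1/\alpha$ is an integer.
   Context: $\mathbb{S}^{n-1}$ is the unit sphere in $\mathbb{R}^n$. For $Y\subseteq\mathbb{R}^n$, $I(Y)=\{\mathbf{x}\cdot\mathbf{y}:\mathbf{x},\mathbf{y}\in Y,\ \mathbf{x}\neq\mathbf{y}\}$. *)

From mathcomp Require Import all_boot all_order all_algebra.
From mathcomp Require Import reals.
Set Implicit Arguments. Unset Strict Implicit. Unset Printing Implicit Defensive.
Import Order.TTheory GRing.Theory Num.Theory.
Local Open Scope ring_scope.

Definition dotv (R : realType) (n : nat) (x y : 'rV[R]_n) : R :=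
  \sum_(i < n) x 0 i * y 0 i.

Definition on_sphere (R : realType) (n : nat) (x : 'rV[R]_n) : Prop :=
  dotv x x = 1.

(* t \in I(Y) = { x.y : x, y in Y, x <> y }, Y a finite set given as a
   duplicate-free sequence. *)
Definition in_I (R : realType) (n : nat) (Y : seq 'rV[R]_n) (t : R) : Prop :=
  exists x y, [/\ x \in Y, y \in Y, x != y & dotv x y = t].

(* Stack the N > 2n points of Y as the rows of a matrix X.  The Gram matrix
   X X^T has rank at most n and equals alpha (S + alpha^-1 I), where S is the
   integer matrix recording the signs of the inner products.  Hence
   l := -1/alpha is an eigenvalue of S of geometric, hence algebraic,
   multiplicity m := N - n > N/2.  Since l is a simple root of its minimal
   polynomial q over Q, q^m divides the characteristic polynomial of S, of
   degree N < 2m; so q is linear and l is rational.  Being a root of a monic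
   integer polynomial, l is then an integer. *)

From mathcomp Require Import all_boot all_order all_algebra all_field.
From mathcomp Require Import boolp reals polyorder zify.
Set Implicit Arguments. Unset Strict Implicit. Unset Printing Implicit Defensive.
Import Order.TTheory GRing.Theory Num.Theory.
Local Open Scope ring_scope.

(* Least-size rational annihilators of [l] stand in for its minimal polynomial
   over Q, which is not available for an arbitrary numFieldType. *)
Section RationalAnnihilator.
Variables (R : numFieldType) (l : R).
Local Notation annihilates f := (root (map_poly (ratr : rat -> R) f) l).

Lemma exists_min_annihilator (f : {poly rat}) : f != 0 -> annihilates f ->
  exists q : {poly rat}, [/\ q != 0, annihilates q &
    forall g, g != 0 -> annihilates g -> (size q <= size g)%N].
Proof.
move=> f_neq0 f_ann.
have sizeP :
    exists k, `[< exists2 g : {poly rat}, g != 0 /\ annihilates g & size g = k >].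
  by exists (size f); apply/asboolP; exists f.
have [_ /asboolP[q [q_neq0 q_ann] <-] q_min] := ex_minnP sizeP.
by exists q; split=> // g g_neq0 g_ann; apply: q_min; apply/asboolP; exists g.
Qed.

Section MinAnnihilator.
Variable q : {poly rat}.
Hypotheses (q_neq0 : q != 0) (q_ann : annihilates q).
Hypothesis q_min : forall g, g != 0 -> annihilates g -> (size q <= size g)%N.

Lemma min_annihilator_dvdp g : annihilates g -> q %| g.
Proof.
move=> g_ann; apply/modp_eq0P; have [//|r_neq0] := eqVneq (g %% q) 0.
suff : (size q <= size (g %% q)%R)%N by rewrite leqNgt ltn_modp q_neq0.
apply: q_min => //.
have -> : g %% q = g - g %/ q * q by rewrite {2}(divp_eq g q) addrC addKr.
by rewrite rmorphB rmorphM /= rootE !hornerE (rootP g_ann) (rootP q_ann) mulr0 subrr.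
Qed.

Lemma min_annihilator_size_gt1 : (1 < size q)%N.
Proof.
rewrite ltnNge; apply/negP => /size1_polyC qE.
by move: q_ann q_neq0; rewrite qE map_polyC rootC fmorph_eq0 => /eqP->; rewrite eqxx.
Qed.

Lemma min_annihilator_simple_root :
  exists2 s : {poly R}, map_poly ratr q = s * ('X - l%:P) & s.[l] != 0.
Proof.
have [s qE] := factor_theorem _ _ q_ann; exists s => //.
apply: contraTneq isT => s_root.
have q'_neq0 : q^`() != 0.
  by rewrite -size_poly_eq0 size_deriv -subn1 subn_eq0 -ltnNge min_annihilator_size_gt1.
suff : (size q <= size q^`())%N by rewrite leqNgt lt_size_deriv.
apply: q_min => //.
by rewrite -deriv_map qE derivM derivXsubC mulr1 rootE !hornerE s_root subrr mulr0 addr0.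
Qed.

Lemma min_annihilator_exp_dvdp m g :
  ('X - l%:P) ^+ m %| map_poly ratr g -> q ^+ m %| g.
Proof.
have [s qE s_l] := min_annihilator_simple_root.
elim: m g => [|m IHm] g; first by move=> _; rewrite expr0 dvd1p.
move=> dvd_g; have : q %| g.
  apply: min_annihilator_dvdp; rewrite -dvdp_XsubCl.
  by apply: dvdp_trans dvd_g; rewrite -[X in X %| _]expr1 dvdp_exp2l.
rewrite dvdp_eq => /eqP gE; rewrite gE exprSr dvdp_mul2r // IHm //.
have cop : coprimep (('X - l%:P) ^+ m) s.
  by apply: coprimep_expl; rewrite coprimep_sym coprimep_XsubC.
rewrite -(Gauss_dvdpl _ cop) -(@dvdp_mul2r _ ('X - l%:P)) ?polyXsubC_eq0 //.
by rewrite -mulrA -qE -rmorphM -gE -exprSr.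
Qed.

Lemma min_annihilator_size2_rat : size q = 2%N -> l = ratr (- q`_0 / q`_1).
Proof.
move=> q_size; have qE : q = q`_1 *: 'X + (q`_0)%:P.
  apply/polyP => -[|[|i]];
    rewrite coefD coefZ coefX coefC ?mulr0 ?mulr1 ?addr0 ?add0r //.
  by rewrite nth_default ?q_size.
have q1_neq0 : q`_1 != 0 by move: q_neq0; rewrite -lead_coef_eq0 lead_coefE q_size.
have : annihilates (q`_1 *: 'X + (q`_0)%:P) by rewrite -qE.
rewrite rmorphD /= map_polyZ map_polyX map_polyC rootE !hornerE /=.
rewrite addr_eq0 => /eqP lE; rewrite fmorph_div rmorphN /= -lE mulrC mulKf //.
by rewrite fmorph_eq0.
Qed.

End MinAnnihilator.

Lemma rat_of_dominant_root (p : {poly rat}) m : p != 0 ->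
  ('X - l%:P) ^+ m %| map_poly ratr p -> (size p <= 2 * m)%N ->
  exists2 r : rat, l = ratr r & root p r.
Proof.
move=> p_neq0 dvd_p p_size.
have m_gt0 : (0 < m)%N.
  by rewrite lt0n; apply: contraTneq p_size => ->; rewrite muln0 leqn0 size_poly_eq0.
have p_ann : annihilates p.
  by rewrite -dvdp_XsubCl; apply: dvdp_trans dvd_p; rewrite -[X in X %| _]expr1 dvdp_exp2l.
have [q [q_neq0 q_ann q_min]] := exists_min_annihilator p_neq0 p_ann.
have q_gt1 := min_annihilator_size_gt1 q_neq0 q_ann.
have qm_size : size (q ^+ m) = ((size q).-1 * m).+1.
  by rewrite -size_exp prednK // size_poly_gt0 expf_neq0.
have q_size : size q = 2%N.
  have qm_dvd := min_annihilator_exp_dvdp q_neq0 q_ann q_min dvd_p.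
  have := leq_trans (dvdp_leq p_neq0 qm_dvd) p_size.
  by rewrite qm_size; move: q_gt1; case: (size q) => [|[|[|k]]] //= _; nia.
have lE := min_annihilator_size2_rat q_neq0 q_ann q_size.
exists (- q`_0 / q`_1) => //.
by move: p_ann; rewrite lE rootE horner_map fmorph_eq0.
Qed.

End RationalAnnihilator.

Lemma map_poly_ratr_intr (R : numFieldType) (p : {poly int}) :
  map_poly ratr (map_poly intr p : {poly rat}) = map_poly intr p :> {poly R}.
Proof. by rewrite -map_poly_comp; apply: eq_map_poly => x /=; rewrite ratr_int. Qed.

Lemma rat_root_monic_int (p : {poly int}) (r : rat) :
  p \is monic -> root (map_poly intr p) r -> exists k : int, r = k%:~R.
Proof.
move=> p_monic p_root; pose z : algC := ratr r.
have z_Aint : z \in Aint.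
  apply: (@root_monic_Aint (map_poly intr p)); last 2 first.
  - by rewrite monic_map.
  - by apply/polyOverP => i; rewrite coef_map /= rpred_int.
  by rewrite -map_poly_ratr_intr rootE horner_map (rootP p_root) rmorph0.
have [k zk] := intrP (Cint_rat_Aint (Crat_rat r) z_Aint).
by exists k; apply: (fmorph_inj (ratr : {rmorphism rat -> algC})); rewrite /= ratr_int.
Qed.

Lemma int_of_dominant_root (R : numFieldType) (p : {poly int}) (l : R) m :
  p \is monic -> ('X - l%:P) ^+ m %| map_poly intr p -> (size p <= 2 * m)%N ->
  exists k : int, l = k%:~R.
Proof.
move=> p_monic dvd_p p_size; pose pq : {poly rat} := map_poly intr p.
have pq_neq0 : pq != 0 by rewrite monic_neq0 // monic_map.
have pq_size : size pq = size p by rewrite size_map_inj_poly //; apply: intr_inj.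
have [r lE r_root] : exists2 r : rat, l = ratr r & root pq r.
  apply: (rat_of_dominant_root (m := m) pq_neq0); last by rewrite pq_size.
  by rewrite map_poly_ratr_intr.
have [k rE] := rat_root_monic_int p_monic r_root.
by exists k; rewrite lE rE ratr_int.
Qed.

Section CharPolyMultiplicity.
Variable F : fieldType.

Lemma char_poly_conj k (E B : 'M[F]_k) :
  E \in unitmx -> char_poly (E *m B *m invmx E) = char_poly B.
Proof.
move=> E_unit; rewrite /char_poly /char_poly_mx.
set pE := map_mx polyC E; set pEi := map_mx polyC (invmx E).
have pEK : pE *m pEi = 1%:M by rewrite -map_mxM mulmxV // map_mx1.
have -> : 'X%:M - map_mx polyC (E *m B *m invmx E) =
          pE *m ('X%:M - map_mx polyC B) *m pEi.
  rewrite !map_mxM mulmxBr mulmxBl mul_mx_scalar -scalemxAl pEK.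
  by rewrite -mul_scalar_mx mulmx1.
by rewrite !det_mulmx mulrAC -det_mulmx pEK det1 mul1r.
Qed.

Variables (m n : nat) (B : 'M[F]_(m + n)) (l : F).

Lemma eigenspace_usubmx_basis : (\rank (B - l%:M)%R <= n)%N ->
  exists2 E : 'M_(m + n), E \in unitmx & usubmx E *m B = l *: usubmx E.
Proof.
move=> B_rank; set K := kermx (B - l%:M).
exists (row_ebase K); first exact: row_ebase_unit.
have m_le : (m <= \rank K)%N by rewrite mxrank_ker; lia.
have usubE : usubmx (row_ebase K) = pid_mx m *m row_base K.
  rewrite /row_base mulmxA mul_pid_mx (minn_idPl m_le) (minn_idPr m_le).
  by rewrite pid_mx_row -{2}(vsubmxK (row_ebase K)) mul_row_col mul1mx mul0mx addr0.
have : usubmx (row_ebase K) *m (B - l%:M) = 0.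
  have /sub_kermxP K_ker : (row_base K <= K)%MS by rewrite eq_row_base.
  by rewrite usubE -mulmxA K_ker mulmx0.
by rewrite mulmxBr mul_mx_scalar => /eqP; rewrite subr_eq0 => /eqP.
Qed.

Lemma char_poly_eigen_usubmx (E : 'M[F]_(m + n)) : E \in unitmx ->
  usubmx E *m B = l *: usubmx E -> ('X - l%:P) ^+ m %| char_poly B.
Proof.
move=> E_unit EB; set C := E *m B *m invmx E.
have usubC : usubmx C = row_mx l%:M 0.
  rewrite /C -!mul_usub_mx EB -scalemxAl mul_usub_mx mulmxV //.
  by rewrite (scalar_mx_block m n 1) /block_mx col_mxKu scale_row_mx scaler0 scalemx1.
have CE : C = block_mx l%:M 0 (lsubmx (dsubmx C)) (rsubmx (dsubmx C)).
  by rewrite /block_mx hsubmxK -usubC vsubmxK.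
rewrite -(char_poly_conj B E_unit) -/C CE /char_poly /char_poly_mx.
rewrite (scalar_mx_block m n) map_block_mx map_mx0 opp_block_mx add_block_mx.
rewrite subrr det_lblock map_scalar_mx /= -(raddfB (@scalar_mx _ m) 'X (l%:P)) /=.
by rewrite det_scalar dvdp_mulr.
Qed.

Lemma XsubC_exp_dvd_char_poly : (\rank (B - l%:M)%R <= n)%N ->
  ('X - l%:P) ^+ m %| char_poly B.
Proof. by case/eigenspace_usubmx_basis => E; apply: char_poly_eigen_usubmx. Qed.

End CharPolyMultiplicity.

Section SphericalThreeDistance.
Variables (R : realType) (n : nat) (Y : seq 'rV[R]_n) (alpha : R).

Definition point_mx k : 'M[R]_(k, n) := \matrix_(i < k) nth 0 Y i.

Definition inner_sign (t : R) : int :=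
  if t == alpha then 1 else if t == - alpha then -1 else 0.

Definition signed_adjacency_mx k : 'M[int]_k := \matrix_(i, j)
  if i == j then 0 else inner_sign (dotv (nth 0 Y i) (nth 0 Y j)).

Lemma gram_point_mxE k i j :
  (point_mx k *m (point_mx k)^T) i j = dotv (nth 0 Y i) (nth 0 Y j).
Proof. by rewrite !mxE; apply: eq_bigr => h _; rewrite !mxE. Qed.

Lemma rank_gram_point_mx k : (\rank (point_mx k *m (point_mx k)^T) <= n)%N.
Proof. exact: leq_trans (mxrankM_maxl _ _) (rank_leq_col _). Qed.

Hypotheses (Y_uniq : uniq Y) (Y_sphere : forall x, x \in Y -> on_sphere x).
Hypotheses (alpha_neq0 : alpha != 0)
  (Y_inner : forall t, in_I Y t -> t = 0 \/ t = alpha \/ t = - alpha).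

Lemma gram_point_mx_adjacency k : (k <= size Y)%N ->
  point_mx k *m (point_mx k)^T =
  alpha *: (map_mx intr (signed_adjacency_mx k) + alpha^-1%:M).
Proof.
move=> k_le; apply/matrixP => i j; rewrite gram_point_mxE !mxE.
have Y_nth (h : 'I_k) : nth 0 Y h \in Y by rewrite mem_nth // (leq_trans _ k_le).
have [<-|ij] := eqVneq i j; first by rewrite mulr1n add0r mulfV // Y_sphere.
rewrite mulr0n addr0; set t := dotv _ _.
have : in_I Y t.
  by exists (nth 0 Y i), (nth 0 Y j); split; rewrite ?nth_uniq ?(leq_trans _ k_le).
have alpha_neqN : alpha != - alpha.
  by rewrite -addr_eq0 -mulr2n mulrn_eq0 (negbTE alpha_neq0).
case/Y_inner => [->|[->|->]]; rewrite /inner_sign.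
- by rewrite eq_sym (negbTE alpha_neq0) eq_sym oppr_eq0 (negbTE alpha_neq0) mulr0.
- by rewrite eqxx mulr1.
- by rewrite eq_sym (negbTE alpha_neqN) eqxx mulrN1.
Qed.

End SphericalThreeDistance.

Theorem theorem7p2 (R : realType) (n : nat) (Y : seq 'rV[R]_n) (alpha : R) :
  (1 <= n)%N ->
  uniq Y ->
  (forall x, x \in Y -> on_sphere x) ->
  alpha != 0 ->
  (forall t : R, in_I Y t <-> (t = 0 \/ t = alpha \/ t = - alpha)) ->
  (2 * n < size Y)%N ->
  exists k : int, alpha^-1 = k%:~R.
Proof.
move=> _ Y_uniq Y_sphere alpha_neq0 Y_inner Y_size.
set m := (size Y - n)%N; set S := signed_adjacency_mx Y alpha (m + n).
have mn_le : (m + n <= size Y)%N by rewrite /m; lia.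
have S_rank : (\rank (map_mx intr S - (- alpha^-1)%:M)%R <= n)%N.
  rewrite raddfN opprK -[_ + _](scalerK alpha_neq0) -gram_point_mx_adjacency //.
  - exact: leq_trans (mxrank_scale _ _) (rank_gram_point_mx _ _).
  - by move=> t /Y_inner.
have := XsubC_exp_dvd_char_poly S_rank; rewrite -map_char_poly => S_dvd.
have [|k kE] := int_of_dominant_root (char_poly_monic S) S_dvd.
  by rewrite size_char_poly; lia.
by exists (- k); rewrite mulrNz -kE opprK.
Qed.
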